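(* The following semigroups have matricial dimension $2$: (a) the cyclic semigroups $\langle a \rangle = \{0, a, 2a, 3a, \ldots\}$ with $a \geq 2$; (b) the ordinary semigroups $S_b = \{0\} \cup \{b,b+1,b+2,\ldots\}$ with $b \geq 2$; (c) the unions $\langle a \rangle \cup S_b$ with $a,b\geq 2$.
   Context: $\mathbb{N} = \{0,1,2,\ldots\}$. A semigroup means an additive subsemigroup of $\mathbb{N}$ containing $0$; $\langle\cdot\rangle$ denotes the semigroup generated by the indicated elements. $\mathsf{M}_d(X)$ denotes the $d\times d$ matrices with entries in $X$. For $A \in \mathsf{M}_d(\mathbb{Q})$, $\mathcal{S}(A) = \{ n \in \mathbb{N} : A^n \in \mathsf{M}_d(\mathbb{Z})\}$. The matricial dimension $\dim_{\mathrm{mat}} S$ of a semigroup $S$ is the smallest $d$ such that $S = \mathcal{S}(A)$ for some $A \in \mathsf{M}_d(\mathbb{Q})$. *)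

From HB Require Import structures.
From mathcomp Require Import all_boot all_order all_algebra.
Set Implicit Arguments. Unset Strict Implicit. Unset Printing Implicit Defensive.
Import Order.TTheory GRing.Theory Num.Theory.
Local Open Scope ring_scope.

Definition Sof (d : nat) (A : 'M[rat]_d) : pred nat :=
  fun n => [forall i, forall j, (A ^+ n) i j \is a Num.int].

Definition realizable (S : pred nat) (d : nat) : Prop :=
  exists A : 'M[rat]_d, S =1 Sof A.

Definition matdim_is (S : pred nat) (d : nat) : Prop :=
  realizable S d /\ (forall d', (d' < d)%N -> ~ realizable S d').

Definition cyclic_sg (a : nat) : pred nat := fun n => (a %| n)%N.

Definition ordinary_sg (b : nat) : pred nat := fun n => (n == 0)%N || (b <= n)%N.

Definition union_sg (a b : nat) : pred nat :=
  fun n => cyclic_sg a n || ordinary_sg b n.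

From mathcomp Require Import all_boot all_order all_algebra.
From mathcomp Require Import ring.
Set Implicit Arguments. Unset Strict Implicit. Unset Printing Implicit Defensive.
Import Order.TTheory GRing.Theory Num.Theory.

(* A lower triangular matrix A = [[al, 0], [ga, be]] has powers
   A^n = [[al^n, 0], [g n, be^n]] with g n = ga (al^(n-1) + al^(n-2) be + ... + be^(n-1)),
   so for integral al and be the set S(A) is cut out by the integrality of g n alone.
   The triples (al, ga, be) = (1, 1/a, 1) and (0, 2^(1-b), 2) give g n = n/a and
   g n = 2^(n-1)/2^(b-1).  For the union take m = a^a - 1, the lift x = a^(m^(b-1))
   and (al, ga, be) = (m, m (x-1)/m^b, m x), so that g n = m^n (x^n - 1)/m^b.  As a has
   order exactly a modulo m and is prime to m, x^n = 1 (mod m) iff a | n, while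
   x^a = (1+m)^(m^(b-1)) = 1 (mod m^b) by lifting the exponent; hence m^b divides
   m^n (x^n - 1) iff a | n or b <= n.
   Dimension < 2 is impossible once 1 is not in S and S <> {0}: a 0x0 matrix has
   S(A) = N, and for rational q, q^n integral with n > 0 forces q integral. *)

Lemma expn1D_expand (u k : nat) : exists w, (1 + u) ^ k = 1 + k * u + u ^ 2 * w.
Proof.
elim: k => [|k [w IH]]; first by exists 0; rewrite muln0.
by exists (k + w + w * u); rewrite expnS IH; ring.
Qed.

Lemma expn1D_expn_mod (m j : nat) : (1 + m) ^ (m ^ j) = 1 %[mod m ^ j.+1].
Proof.
suff [t ->] : exists t, (1 + m) ^ (m ^ j) = 1 + m ^ j.+1 * t.
  by rewrite mulnC addnC modnMDl.
elim: j => [|j [t IH]]; first by exists 1; rewrite muln1.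
have [w Hw] := expn1D_expand (m ^ j.+1 * t) m.
by exists (t + m ^ j * t ^ 2 * w); rewrite expnS mulnC expnM IH Hw !expnS; ring.
Qed.

Lemma expn_mod1 (y d k : nat) : y = 1 %[mod d] -> y ^ k = 1 %[mod d].
Proof. by move=> y1; rewrite -modnXm y1 modnXm exp1n. Qed.

Section OrderModPred.

Variable a : nat.
Hypothesis a_gt1 : 1 < a.

Local Notation m := (a ^ a - 1).

Lemma expn_pred_gt0 : 0 < m.
Proof. by rewrite subn_gt0 -{1}(expn0 a) ltn_exp2l // ltnW. Qed.

Lemma expn_self_eq : a ^ a = 1 + m.
Proof. by rewrite addnC subnK // expn_gt0 ltnW. Qed.

Lemma expn_self_mod : a ^ a = 1 %[mod m].
Proof. by rewrite {1}expn_self_eq addnC modnDl. Qed.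

Lemma coprime_expn_pred : coprime a m.
Proof.
by rewrite -(coprime_pexpl _ _ (ltnW a_gt1)) {1}expn_self_eq add1n coprimeSn.
Qed.

Lemma expn_eq1_mod_pred (k : nat) : (a ^ k == 1 %[mod m]) = (a %| k).
Proof.
have a_gt0 : 0 < a by exact: ltnW.
have -> : a ^ k = a ^ (k %% a) %[mod m].
  rewrite {1}(divn_eq k a) mulnC expnD expnM -modnMml.
  by rewrite (expn_mod1 _ expn_self_mod) modnMml mul1n.
have lt_r_m : a ^ (k %% a) - 1 < m.
  by rewrite ltn_sub2r ?ltn_exp2l ?ltn_mod // -{1}(expn0 a) ltn_exp2l.
rewrite eqn_mod_dvd ?expn_gt0 ?a_gt0 // /dvdn modn_small //.
by rewrite subn_eq0 -(expn0 a) leq_exp2l // leqn0.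
Qed.

Variable b : nat.

Local Notation x := (a ^ (m ^ b.-1)).

Lemma expn_eq1_mod_pred_lifted (n : nat) : (x ^ n == 1 %[mod m]) = (a %| n).
Proof.
by rewrite -expnM expn_eq1_mod_pred Gauss_dvdr // coprimeXr // coprime_expn_pred.
Qed.

Lemma expn_lifted_mod (n : nat) : a %| n -> x ^ n = 1 %[mod m ^ b].
Proof.
case/dvdnP => q ->; rewrite mulnC expnM; apply: expn_mod1.
rewrite -expnM mulnC expnM.
case: b => [|b']; first by rewrite !modn1.
by rewrite {1}expn_self_eq expn1D_expn_mod.
Qed.

Lemma dvdn_lifted_diff (n : nat) :
  (m ^ b %| m ^ n * (x ^ n - 1)) = (a %| n) || (b <= n).
Proof.
have xn_gt0 : 0 < x ^ n by rewrite !expn_gt0 ltnW.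
have [le_bn | lt_nb] := leqP b n.
  by rewrite orbT dvdn_mulr ?dvdn_exp2l.
have -> : m ^ b = m ^ n * m ^ (b - n) by rewrite -expnD subnKC // ltnW.
rewrite orbF dvdn_pmul2l ?expn_gt0 ?expn_pred_gt0 //.
apply/idP/idP => [dvd_mx | /expn_lifted_mod/eqP].
  rewrite -expn_eq1_mod_pred_lifted eqn_mod_dvd //.
  by apply: dvdn_trans dvd_mx; rewrite -{1}(expn1 m) dvdn_exp2l // subn_gt0.
rewrite eqn_mod_dvd // => /(dvdn_trans _); apply.
by rewrite dvdn_exp2l // leq_subr.
Qed.

End OrderModPred.

Local Open Scope ring_scope.

Lemma Qint_divn (k d : nat) : (0 < d)%N ->
  ((k%:R / d%:R : rat) \is a Num.int) = (d %| k)%N.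
Proof.
move=> d_gt0; apply/idP/idP => [/intrP[z kdz] | /Qnat_dvd /andP[] //].
have : (k%:R : rat) = z%:~R * d%:R by rewrite -kdz mulfVK // pnatr_eq0 -lt0n.
rewrite !pmulrn -intrM => /intr_inj k_eq.
by rewrite -[(d %| k)%N]/(d%:Z %| k%:Z)%Z k_eq dvdz_mull.
Qed.

Lemma Qint_exprn (q : rat) (n : nat) : (0 < n)%N ->
  (q ^+ n \is a Num.int) = (q \is a Num.int).
Proof.
move=> n_gt0; apply/idP/idP => [/intrP[k qnk] | /rpredX //].
have num_n : numq q ^+ n = k * denq q ^+ n.
  by apply: (@intr_inj rat); rewrite rmorphM /= !rmorphXn /= numqE exprMn qnk.
have : (denq q %| 1)%Z.
  have cop : coprimez (denq q) (numq q ^+ n).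
    by apply: coprimezXr; rewrite coprimezE coprime_sym coprime_num_den.
  by rewrite -(Gauss_dvdzr 1 cop) mulr1 num_n dvdz_mull // dvdz_exp.
by rewrite dvdz1 Qint_def; have := denq_gt0 q; case: (denq q) => [[|[|]]|].
Qed.

Definition lower_tri (al ga be : rat) : 'M[rat]_2 :=
  \matrix_(i, j) if (i == 0 :> nat) then (if (j == 0 :> nat) then al else 0)
                 else (if (j == 0 :> nat) then ga else be).

Lemma lower_triM (al ga be al' ga' be' : rat) :
  lower_tri al ga be * lower_tri al' ga' be' =
  lower_tri (al * al') (ga * al' + be * ga') (be * be').
Proof.
apply/matrixP => i j; rewrite -mulmxE !mxE !big_ord_recr big_ord0 /= !mxE /=.
by case: i => [[|[|i]] ?] //=; case: j => [[|[|j]] ?] //=; ring.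
Qed.

Section LowerTriPower.

Variables (al ga be : rat) (g : nat -> rat).
Hypotheses (g0 : g 0%N = 0) (gS : forall n, g n.+1 = g n * al + be ^+ n * ga).

Lemma lower_triX (n : nat) :
  lower_tri al ga be ^+ n = lower_tri (al ^+ n) (g n) (be ^+ n).
Proof.
elim: n => [|n IHn]; last by rewrite exprSr IHn lower_triM gS -!exprSr.
rewrite !expr0 g0; apply/matrixP => i j; rewrite !mxE.
by case: i => [[|[|i]] ?] //=; case: j => [[|[|j]] ?].
Qed.

Lemma Sof_lower_tri (n : nat) : Sof (lower_tri al ga be) n =
  [&& al ^+ n \is a Num.int, g n \is a Num.int & be ^+ n \is a Num.int].
Proof.
rewrite /Sof lower_triX; apply/forallP/and3P => [entry_int | [? ? ?] i].
  split; [ have := forallP (entry_int ord0) ord0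
         | have := forallP (entry_int ord_max) ord0
         | have := forallP (entry_int ord_max) ord_max ]; by rewrite mxE.
by apply/forallP => j; rewrite mxE; case: i => [[|[|i]] ?] //=; case: j => [[|[|j]] ?].
Qed.

End LowerTriPower.

Lemma realizable_cyclic (a : nat) : (0 < a)%N -> realizable (cyclic_sg a) 2.
Proof.
move=> a_gt0; exists (lower_tri 1 a%:R^-1 1) => n.
rewrite (@Sof_lower_tri _ _ _ (fun n => n%:R / a%:R)) ?mul0r //; last first.
  by move=> k; rewrite expr1n mulr1 mul1r -natr1 mulrDl mul1r.
by rewrite expr1n rpred1 Qint_divn ?andbT.
Qed.

Lemma realizable_ordinary (b : nat) : (0 < b)%N -> realizable (ordinary_sg b) 2.
Proof.
move=> b_gt0; exists (lower_tri 0 (2 ^ b.-1)%:R^-1 2) => n.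
pose g n : rat := if n is n'.+1 then (2 ^ n')%:R / (2 ^ b.-1)%:R else 0.
rewrite (@Sof_lower_tri _ _ _ g) //; last first.
  by case=> [|k]; rewrite /g ?mulr0 ?add0r // natrX.
rewrite expr0n rpredX ?andbT //=; case: n => [|n] //=.
by rewrite Qint_divn ?expn_gt0 // dvdn_Pexp2l // -subn1 leq_subLR add1n.
Qed.

Lemma realizable_geom_diff (m x b : nat) (S : pred nat) : (0 < m)%N -> (0 < x)%N ->
  (forall n, S n = (m ^ b %| m ^ n * (x ^ n - 1))%N) -> realizable S 2.
Proof.
move=> m_gt0 x_gt0 S_dvd; have mb_neq0 : (m%:R : rat) ^+ b != 0.
  by rewrite expf_neq0 // pnatr_eq0 -lt0n.
exists (lower_tri m%:R (m%:R * (x%:R - 1) / m%:R ^+ b) (m%:R * x%:R)) => n.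
pose g n : rat := m%:R ^+ n * (x%:R ^+ n - 1) / m%:R ^+ b.
rewrite (@Sof_lower_tri _ _ _ g); first last.
- by move=> k; rewrite /g !exprS exprMn; field.
- by rewrite /g !expr0 subrr mulr0 mul0r.
have -> : g n = (m ^ n * (x ^ n - 1))%N%:R / (m ^ b)%N%:R.
  by rewrite /g natrM natrB ?expn_gt0 ?x_gt0 // !natrX.
by rewrite -natrM !rpredX ?rpred_nat //= andbT Qint_divn ?expn_gt0 ?m_gt0.
Qed.

Lemma realizable_union (a b : nat) : (1 < a)%N -> realizable (union_sg a b) 2.
Proof.
move=> a_gt1; apply: (@realizable_geom_diff (a ^ a - 1) (a ^ ((a ^ a - 1) ^ b.-1)) b).
- exact: expn_pred_gt0.
- by rewrite expn_gt0 ltnW.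
move=> n; rewrite dvdn_lifted_diff // /union_sg /cyclic_sg /ordinary_sg.
by case: n => [|n]; rewrite ?dvdn0.
Qed.

Lemma mx11_exprn (R : pzRingType) (A : 'M[R]_1) (n : nat) :
  (A ^+ n) 0 0 = A 0 0 ^+ n.
Proof.
elim: n => [|n IHn]; first by rewrite !expr0 mxE.
by rewrite !exprSr -mulmxE mxE big_ord1 IHn.
Qed.

Lemma Sof_mx1 (A : 'M[rat]_1) (n : nat) : Sof A n = (A 0 0 ^+ n \is a Num.int).
Proof.
apply/forallP/idP => [/(_ 0)/forallP/(_ 0) | An_int i]; first by rewrite mx11_exprn.
by apply/forallP => j; rewrite !ord1 mx11_exprn.
Qed.

Lemma matdim_is2_of_realizable (S : pred nat) (n0 : nat) :
  realizable S 2 -> ~~ S 1%N -> S n0 -> (0 < n0)%N -> matdim_is S 2.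
Proof.
move=> S_real S1 Sn0 n0_gt0; split=> // [[|[|//]]] _ [A SA].
  have : Sof A 1 by apply/forallP => -[].
  by rewrite -SA (negbTE S1).
by move: S1 Sn0; rewrite !SA !Sof_mx1 expr1 Qint_exprn // => /negP.
Qed.

Theorem theorem2p8 :
  (forall a : nat, (2 <= a)%N -> matdim_is (cyclic_sg a) 2) /\
  (forall b : nat, (2 <= b)%N -> matdim_is (ordinary_sg b) 2) /\
  (forall a b : nat, (2 <= a)%N -> (2 <= b)%N -> matdim_is (union_sg a b) 2).
Proof.
split; [|split].
- move=> a a_gt1; apply: (@matdim_is2_of_realizable _ a).
  + exact/realizable_cyclic/ltnW.
  + by rewrite /cyclic_sg /= dvdn1 gtn_eqF.
  + by rewrite /cyclic_sg /= dvdnn.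
  + exact: ltnW.
- move=> b b_gt1; apply: (@matdim_is2_of_realizable _ b).
  + exact/realizable_ordinary/ltnW.
  + by rewrite /ordinary_sg /= -ltnNge.
  + by rewrite /ordinary_sg /= leqnn orbT.
  + exact: ltnW.
- move=> a b a_gt1 b_gt1; apply: (@matdim_is2_of_realizable _ a).
  + exact: realizable_union.
  + by rewrite /union_sg /cyclic_sg /ordinary_sg /= dvdn1 gtn_eqF //= -ltnNge.
  + by rewrite /union_sg /cyclic_sg /= dvdnn.
  + exact: ltnW.
Qed.
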